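(* Let $n \ge 1$ be an integer and let $R$ be a $2n$-adically closed ring. Then there are no polygons in $R$.
   Context: All rings are commutative with $1$. For $k \in \mathbb{N}=\{1,2,\dots\}$, a ring $R$ is called $k$-adically closed if every monic polynomial of degree $k$ with coefficients in $R$ has a root in $R$ (a $2$-adically closed ring is also called quadratically closed). A polygon in a ring $R$ consists of: an integer $m>2$, irreducible closed subsets $C_0,\dots,C_{m-1}$ of $\mathrm{Spec}(R)$, and irreducible closed subsets $D_0,\dots,D_{m-1}$ of $\mathrm{Spec}(R)$, such that for all $i,j\in\{0,\dots,m-1\}$ we have $D_j\subset C_i$ if and only if $i=j$ or $i\equiv j+1 \pmod m$. (Irreducible closed subsets are nonempty.) *)

From HB Require Import structures.
From mathcomp Require Import all_boot all_order all_algebra.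
Set Implicit Arguments. Unset Strict Implicit. Unset Printing Implicit Defensive.
Import GRing.Theory.
Local Open Scope ring_scope.

Definition adically_closed (R : comNzRingType) (k : nat) : Prop :=
  forall p : {poly R}, p \is monic -> size p = k.+1 -> exists x : R, root p x.

Definition is_ideal (R : comNzRingType) (I : R -> Prop) : Prop :=
  [/\ I 0, (forall x y, I x -> I y -> I (x + y)) & (forall a x, I x -> I (a * x))].

Definition is_prime_ideal (R : comNzRingType) (P : R -> Prop) : Prop :=
  [/\ is_ideal P, ~ P 1 & (forall a b, P (a * b) -> P a \/ P b)].

Definition spec_subset (R : comNzRingType) := (R -> Prop) -> Prop.

Definition spec_sub (R : comNzRingType) (A B : spec_subset R) : Prop :=
  forall P, A P -> B P.

Definition zariski_closed (R : comNzRingType) (Z : spec_subset R) : Prop :=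
  exists S : R -> Prop, forall P : R -> Prop,
    Z P <-> (is_prime_ideal P /\ forall x, S x -> P x).

Definition irreducible_closed (R : comNzRingType) (Z : spec_subset R) : Prop :=
  [/\ zariski_closed Z, (exists P, Z P) &
      (forall Z1 Z2 : spec_subset R, zariski_closed Z1 -> zariski_closed Z2 ->
         spec_sub Z (fun P => Z1 P \/ Z2 P) -> spec_sub Z Z1 \/ spec_sub Z Z2)].

Definition polygon (R : comNzRingType) : Prop :=
  exists (m : nat) (hm : (2 < m)%N) (C D : 'I_m -> spec_subset R),
    [/\ (forall i, irreducible_closed (C i)),
        (forall j, irreducible_closed (D j)) &
        (forall i j : 'I_m,
           spec_sub (D j) (C i) <-> (i = j \/ (i : nat) = ((j : nat) + 1) %% m)%N)].

From HB Require Import structures.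
From mathcomp Require Import all_boot all_order all_algebra.
From mathcomp Require Import zify ring.
From Stdlib Require Import Classical.
Set Implicit Arguments. Unset Strict Implicit. Unset Printing Implicit Defensive.
Import GRing.Theory.
Local Open Scope ring_scope.

(* An irreducible closed subset Z of Spec(R) is V(p) for the prime ideal
   p = I(Z) of functions vanishing on Z, and D ⊆ C iff I(C) ⊆ I(D).  A
   polygon therefore yields primes c_0, ..., c_M and d_0, ..., d_M (M >= 2)
   with c_i ⊆ d_j exactly when i = j or i = j + 1 (mod M + 1).

   A 2n-adically closed ring has, for all b and s, an element r at which
   x^2 - b x + s vanishes modulo every prime: take a root of the n-th power
   of that monic quadratic.

   Prime avoidance gives a, e, w with a ∈ c_2 ∩ ... ∩ c_M, a ∉ d_0;
   e ∈ c_1 ∩ ... ∩ c_(M-1), e ∉ d_M; and w ∈ c_0, w ∉ d_1 ∪ ... ∪ d_(M-1).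
   Then b = a + w + e lies in no d_j.  With r a root of x^2 - b x + a e
   modulo all primes, the factorisation r (r - b) ∈ c_i for 1 <= i <= M
   shows r ∈ d_(i-1) iff r ∈ d_i, so r ∈ d_0 iff r ∈ d_M.  But modulo c_0
   the quadratic is (r - a)(r - e), and either factor in c_0 forces a ∈ d_0
   or e ∈ d_M. *)

Section IdealClosure.
Variables (R : comNzRingType) (I : R -> Prop).
Hypothesis idealI : is_ideal I.

Lemma ideal_zero : I 0. Proof. by case: idealI. Qed.

Lemma ideal_add x y : I x -> I y -> I (x + y). Proof. by case: idealI => _ + _; apply. Qed.

Lemma ideal_mull {a x : R} : I x -> I (a * x). Proof. by case: idealI => _ _; apply. Qed.

Lemma ideal_mulr {a x : R} : I x -> I (x * a). Proof. by rewrite mulrC; apply: ideal_mull. Qed.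

Lemma ideal_sub x y : I x -> I y -> I (x - y).
Proof. by move=> Ix Iy; rewrite -mulN1r; apply: ideal_add (ideal_mull Iy). Qed.

End IdealClosure.

Section PrimeIdeal.
Variables (R : comNzRingType) (P : R -> Prop).
Hypothesis primeP : is_prime_ideal P.

Lemma prime_ideal : is_ideal P. Proof. by case: primeP. Qed.

Lemma prime_not1 : ~ P 1. Proof. by case: primeP. Qed.

Lemma prime_mul a b : P (a * b) -> P a \/ P b. Proof. by case: primeP => _ _; apply. Qed.

Lemma prime_expn y k : P (y ^+ k) -> P y.
Proof.
elim: k => [|k IHk]; first by rewrite expr0 => /prime_not1.
by rewrite exprS => /prime_mul [].
Qed.

End PrimeIdeal.

Lemma size_monic_exp (R : comNzRingType) (q : {poly R}) k :
  q \is monic -> size (q ^+ k) = ((size q).-1 * k).+1.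
Proof.
move=> monq; have q_gt0 : (0 < size q)%N by rewrite size_poly_gt0 monic_neq0.
elim: k => [|k IHk]; first by rewrite expr0 size_poly1 muln0.
rewrite exprS size_monicM ?monic_neq0 ?monic_exp // IHk; lia.
Qed.

Definition quadratic_roots_mod_primes (R : comNzRingType) : Prop :=
  forall b s : R, exists r : R,
    forall P, is_prime_ideal P -> P ((r - b) * r + s).

(* A root r of (x^2 - b x + s)^n, a monic polynomial of degree 2n, makes
   (r^2 - b r + s)^n vanish, so r^2 - b r + s lies in every prime. *)
Lemma adically_closed_quadratic (R : comNzRingType) (n : nat) :
  adically_closed R (2 * n) -> quadratic_roots_mod_primes R.
Proof.
move=> closedR b s.
pose q : {poly R} := ('X - b%:P) * 'X + s%:P.
have monq : q \is monic.
  rewrite /q monicE lead_coefDl ?lead_coefMX ?lead_coefXsubC //.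
  by rewrite size_polyC size_mulX ?monic_neq0 ?monicXsubC // size_XsubC; case: (s == 0).
have size_q : size q = 3%N.
  by rewrite size_MXaddC size_XsubC (negbTE (monic_neq0 (monicXsubC b))).
have size_qn : size (q ^+ n) = (2 * n).+1.
  by rewrite size_monic_exp // size_q.
have [r /eqP qnr] := closedR (q ^+ n) (monic_exp n monq) size_qn.
exists r => P primeP; apply: (prime_expn primeP (k := n)).
have -> : (r - b) * r + s = q.[r] by rewrite /q hornerMXaddC !hornerE.
rewrite -horner_exp qnr; exact: ideal_zero (prime_ideal primeP).
Qed.

Definition ideal_incl (R : comNzRingType) (I J : R -> Prop) : Prop :=
  forall x, I x -> J x.

Definition vanishing_ideal (R : comNzRingType) (Z : spec_subset R) : R -> Prop :=
  fun x => forall P, Z P -> P x.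

Section ZariskiClosed.
Variable R : comNzRingType.
Implicit Types (Z C D : spec_subset R) (P Q : R -> Prop).

Lemma closed_prime Z P : zariski_closed Z -> Z P -> is_prime_ideal P.
Proof. by case=> S defZ /defZ []. Qed.

Lemma irreducible_is_closed Z : irreducible_closed Z -> zariski_closed Z.
Proof. by case. Qed.

Lemma closed_point_zero_set (a : R) :
  zariski_closed (fun P : R -> Prop => is_prime_ideal P /\ P a).
Proof.
exists (eq^~ a) => P; split=> [[primeP Pa] | [primeP Pa]]; split=> //.
- by move=> x ->.
- exact: Pa.
Qed.

Lemma closed_vanishingE Z Q : zariski_closed Z ->
  Z Q <-> is_prime_ideal Q /\ ideal_incl (vanishing_ideal Z) Q.
Proof.
case=> S defZ; split=> [ZQ | [primeQ subQ]].
  by split=> [|x]; [case: (defZ Q) => /(_ ZQ) [] | apply].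
by apply/defZ; split=> // x Sx; apply: subQ => P /defZ [_]; apply.
Qed.

(* I(Z) is prime for Z irreducible: if ab ∈ I(Z), Z is covered by V(a) and
   V(b), hence lies in one of them. *)
Lemma irreducible_vanishing_prime Z :
  irreducible_closed Z -> is_prime_ideal (vanishing_ideal Z).
Proof.
case=> closedZ [P0 ZP0] irrZ.
have primeZ P : Z P -> is_prime_ideal P := closed_prime closedZ.
split; first split.
- by move=> P /primeZ /prime_ideal /ideal_zero.
- move=> x y Ix Iy P ZP; have idealP := prime_ideal (primeZ P ZP).
  by apply: (ideal_add idealP); [apply: Ix | apply: Iy].
- move=> a x Ix P ZP; have idealP := prime_ideal (primeZ P ZP).
  by apply: (ideal_mull idealP); apply: Ix.
- by move=> I1; apply: (prime_not1 (primeZ P0 ZP0)); apply: I1.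
move=> a b Iab.
have coverZ : spec_sub Z (fun P => (is_prime_ideal P /\ P a) \/ (is_prime_ideal P /\ P b)).
  move=> P ZP; have primeP := primeZ P ZP.
  by have [] := prime_mul primeP (Iab P ZP); [left | right].
have [subA | subB] := irrZ _ _ (closed_point_zero_set a) (closed_point_zero_set b) coverZ.
- by left=> P /subA [].
- by right=> P /subB [].
Qed.

Lemma spec_sub_vanishing C D : zariski_closed C -> zariski_closed D ->
  spec_sub D C <-> ideal_incl (vanishing_ideal C) (vanishing_ideal D).
Proof.
move=> closedC closedD; split=> [DC x Cx P DP | subCD P DP]; first exact: Cx (DC P DP).
have [primeP subP] := (closed_vanishingE P closedD).1 DP.
by apply/(closed_vanishingE P closedC); split=> // x /subCD /subP.
Qed.

End ZariskiClosed.

(* If each ideal Q_j contains an element outside the prime P, so does their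
   intersection: take the product of these elements. *)
Lemma prime_product_avoidance (R : comNzRingType) (P : R -> Prop)
    (Q : nat -> R -> Prop) (l : seq nat) :
  is_prime_ideal P ->
  (forall j, j \in l -> is_ideal (Q j)) ->
  (forall j, j \in l -> exists2 x, Q j x & ~ P x) ->
  exists2 t, (forall j, j \in l -> Q j t) & ~ P t.
Proof.
move=> primeP; elim: l => [|j l IHl] idealQ avoidQ.
  by exists 1 => //; apply: prime_not1.
have sub_l k : k \in l -> k \in j :: l by rewrite in_cons => ->; rewrite orbT.
have [x Qjx notPx] := avoidQ j (mem_head j l).
have [t Qt notPt] := IHl (fun k kl => idealQ k (sub_l k kl)) (fun k kl => avoidQ k (sub_l k kl)).
exists (x * t) => [k | /(prime_mul primeP) []//].
rewrite in_cons => /orP [/eqP -> | kl].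
- exact: (ideal_mulr (idealQ j (mem_head j l)) Qjx).
- exact: (ideal_mull (idealQ k (sub_l k kl)) (Qt k kl)).
Qed.

(* The new element is x + z * t, where x avoids the primes of
   the tail, z avoids the head prime, and t lies in the tail but not in the
   head prime. *)
Lemma prime_avoidance (R : comNzRingType) (I : R -> Prop) (Q : nat -> R -> Prop)
    (l : seq nat) :
  is_ideal I -> uniq l -> (forall j, j \in l -> is_prime_ideal (Q j)) ->
  (forall j, j \in l -> exists2 x, I x & ~ Q j x) ->
  (forall j k, j \in l -> k \in l -> j != k -> exists2 x, Q j x & ~ Q k x) ->
  exists2 x, I x & forall j, j \in l -> ~ Q j x.
Proof.
move=> idealI; elim: l => [|j l IHl] /=.
  by move=> *; exists 0 => //; apply: ideal_zero.
case/andP=> j_notin_l uniq_l primeQ avoidI incompQ.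
have sub_l k : k \in l -> k \in j :: l by rewrite in_cons => ->; rewrite orbT.
have primeQj := primeQ j (mem_head j l).
have [x Ix avoid_x] := IHl uniq_l (fun k kl => primeQ k (sub_l k kl))
  (fun k kl => avoidI k (sub_l k kl))
  (fun k k' kl k'l => incompQ k k' (sub_l k kl) (sub_l k' k'l)).
have [Qjx | notQjx] := classic (Q j x); last first.
  by exists x => // k; rewrite in_cons => /orP [/eqP -> | /avoid_x].
have [z Iz notQjz] := avoidI j (mem_head j l).
have [t Qt notQjt] : exists2 t, (forall k, k \in l -> Q k t) & ~ Q j t.
  apply: prime_product_avoidance => // k kl.
    exact: prime_ideal (primeQ k (sub_l k kl)).
  apply: incompQ; rewrite ?mem_head ?sub_l //.
  by apply: contraNneq j_notin_l => <-.
exists (x + z * t); first exact: (ideal_add idealI Ix (ideal_mulr idealI Iz)).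
move=> k; rewrite in_cons => /orP [/eqP -> | kl] Qk.
  have : Q j (z * t).
    by rewrite -(addKr x (z * t)) addrC; exact: (ideal_sub (prime_ideal primeQj) Qk Qjx).
  by case/(prime_mul primeQj).
have idealQk := prime_ideal (primeQ k (sub_l k kl)).
apply: (avoid_x k kl); rewrite -(addrK (z * t) x).
exact: (ideal_sub idealQk Qk (ideal_mull idealQk (Qt k kl))).
Qed.

(* Adjacency in a polygon with vertices 0..M: the vertex d_j lies on the
   edges c_j and c_(j+1), indices taken modulo M + 1. *)
Definition cyclic_adjacent (M i j : nat) : Prop :=
  (i = j \/ i = j.+1 \/ (i = 0 /\ j = M))%N.

Section PrimePolygon.
Variables (R : comNzRingType) (M : nat) (c d : nat -> R -> Prop).
Hypotheses (M_ge2 : (2 <= M)%N)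
  (prime_c : forall i, is_prime_ideal (c i)) (prime_d : forall j, is_prime_ideal (d j))
  (incl_cd : forall i j, (i <= M)%N -> (j <= M)%N ->
     ideal_incl (c i) (d j) <-> cyclic_adjacent M i j).

Lemma c_sub_d i j : (i <= M)%N -> (j <= M)%N -> cyclic_adjacent M i j ->
  ideal_incl (c i) (d j).
Proof. by move=> iM jM /(incl_cd iM jM). Qed.

Lemma adjacent_of_incl i j : (i <= M)%N -> (j <= M)%N -> ideal_incl (c i) (d j) ->
  cyclic_adjacent M i j.
Proof. by move=> iM jM /(incl_cd iM jM). Qed.

Lemma c_not_sub_d i j : (i <= M)%N -> (j <= M)%N -> ~ cyclic_adjacent M i j ->
  exists2 x, c i x & ~ d j x.
Proof.
move=> iM jM not_adj; apply: NNPP => no_x; apply/not_adj/(incl_cd iM jM) => x cx.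
by apply: NNPP => not_dx; apply: no_x; exists x.
Qed.

(* The inner vertices d_1, ..., d_(M-1) are pairwise incomparable: d_j ⊆ d_k
   would make both c_j and c_(j+1) adjacent to d_k. *)
Lemma d_incomparable j k : (1 <= j < M)%N -> (1 <= k < M)%N -> j != k ->
  exists2 x, d j x & ~ d k x.
Proof.
move=> jM kM /eqP j_neq_k; apply: NNPP => no_x.
have djk : ideal_incl (d j) (d k).
  by move=> x dx; apply: NNPP => not_dx; apply: no_x; exists x.
have adjacent_k i : (i <= M)%N -> cyclic_adjacent M i j -> cyclic_adjacent M i k.
  move=> iM adj; apply: (adjacent_of_incl iM); first lia.
  by move=> x /(c_sub_d iM _ adj) dx; apply/djk/dx; lia.
have := adjacent_k j; have := adjacent_k j.+1; rewrite /cyclic_adjacent; lia.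
Qed.

Lemma exists_a : exists2 a, (forall i, (2 <= i <= M)%N -> c i a) & ~ d 0 a.
Proof.
have [a c_a not_d0a] : exists2 a, (forall i, i \in iota 2 M.-1 -> c i a) & ~ d 0 a.
  apply: prime_product_avoidance => // i; rewrite mem_iota => iM.
    exact: prime_ideal (prime_c i).
  by apply: c_not_sub_d; rewrite /cyclic_adjacent; lia.
by exists a => // i iM; apply: c_a; rewrite mem_iota; lia.
Qed.

Lemma exists_e : exists2 e, (forall i, (1 <= i < M)%N -> c i e) & ~ d M e.
Proof.
have [e c_e not_dMe] : exists2 e, (forall i, i \in iota 1 M.-1 -> c i e) & ~ d M e.
  apply: prime_product_avoidance => // i; rewrite mem_iota => iM.
    exact: prime_ideal (prime_c i).
  by apply: c_not_sub_d; rewrite /cyclic_adjacent; lia.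
by exists e => // i iM; apply: c_e; rewrite mem_iota; lia.
Qed.

Lemma exists_w : exists2 w, c 0 w & forall j, (1 <= j < M)%N -> ~ d j w.
Proof.
have [w c0w not_dw] : exists2 w, c 0 w & forall j, j \in iota 1 M.-1 -> ~ d j w.
  apply: prime_avoidance; rewrite ?iota_uniq //.
  - exact: prime_ideal (prime_c 0).
  - move=> j; rewrite mem_iota => jM.
    by apply: c_not_sub_d; rewrite /cyclic_adjacent; lia.
  - by move=> j k; rewrite !mem_iota => jM kM; apply: d_incomparable; lia.
by exists w => // j jM; apply: not_dw; rewrite mem_iota; lia.
Qed.

Section Witnesses.
Variables a e w : R.
Hypotheses (c_a : forall i, (2 <= i <= M)%N -> c i a) (not_d0a : ~ d 0 a)
  (c_e : forall i, (1 <= i < M)%N -> c i e) (not_dMe : ~ d M e)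
  (c0w : c 0 w) (not_dw : forall j, (1 <= j < M)%N -> ~ d j w).

(* a ∈ d_j for j >= 1, through the edge c_(j+1) (or c_M when j = M). *)
Lemma d_a j : (1 <= j <= M)%N -> d j a.
Proof.
by move=> jM; apply: (c_sub_d (i := minn j.+1 M)) (c_a _); rewrite /cyclic_adjacent; lia.
Qed.

(* e ∈ d_j for j < M, through the edge c_j (or c_1 when j = 0). *)
Lemma d_e j : (j < M)%N -> d j e.
Proof.
by move=> jM; apply: (c_sub_d (i := maxn j 1)) (c_e _); rewrite /cyclic_adjacent; lia.
Qed.

Lemma d_w j : j = 0%N \/ j = M -> d j w.
Proof. by move=> j0M; apply: (c_sub_d (i := 0)) c0w; rewrite /cyclic_adjacent; lia. Qed.

(* a + w + e lies in no d_j: in each d_j two of the summands lie, and the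
   third does not. *)
Lemma sum_avoids j : (j <= M)%N -> ~ d j (a + w + e).
Proof.
move=> jM d_sum; have ideal_d := prime_ideal (prime_d j).
have [j0 | j_gt0] := posnP j.
  subst j; apply: not_d0a; have -> : a = a + w + e - w - e by ring.
  by apply: (ideal_sub ideal_d (ideal_sub ideal_d d_sum (d_w _))) (d_e _); lia.
have [jeM | j_ltM] := eqVneq j M.
  subst j; apply: not_dMe; have -> : e = a + w + e - a - w by ring.
  by apply: (ideal_sub ideal_d (ideal_sub ideal_d d_sum (d_a _))) (d_w _); lia.
apply: (not_dw (j := j)); first lia.
have -> : w = a + w + e - a - e by ring.
by apply: (ideal_sub ideal_d (ideal_sub ideal_d d_sum (d_a _))) (d_e _); lia.
Qed.

Section Root.
Variable r : R.
Hypothesis root_r : forall P, is_prime_ideal P -> P ((r - (a + w + e)) * r + a * e).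

(* On the edge c_i (1 <= i <= M), a e ∈ c_i, so r ∈ c_i or r - (a + w + e)
   ∈ c_i.  In the first case r lies in both endpoints d_(i-1) and d_i; in
   the second in neither, since a + w + e avoids them. *)
Lemma root_step i : (1 <= i <= M)%N -> d i.-1 r <-> d i r.
Proof.
move=> iM; have ideal_c := prime_ideal (prime_c i).
have c_ae : c i (a * e).
  have [i1 | i_neq1] := eqVneq i 1%N.
    by apply: (ideal_mull ideal_c); apply: c_e; lia.
  by apply: (ideal_mulr ideal_c); apply: c_a; lia.
have sub_prev : ideal_incl (c i) (d i.-1) by apply: c_sub_d; rewrite /cyclic_adjacent; lia.
have sub_self : ideal_incl (c i) (d i) by apply: c_sub_d; rewrite /cyclic_adjacent; lia.
have : c i ((r - (a + w + e)) * r).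
  rewrite -(addrK (a * e) (_ * r)).
  exact: (ideal_sub ideal_c (root_r (prime_c i)) c_ae).
case/(prime_mul (prime_c i)) => [c_rb | c_r]; last first.
  by split=> _; [apply: sub_self | apply: sub_prev].
have not_d k : (k <= M)%N -> ideal_incl (c i) (d k) -> ~ d k r.
  move=> kM sub_k d_r; apply: (sum_avoids kM); rewrite -(subKr r (a + w + e)).
  exact: (ideal_sub (prime_ideal (prime_d k)) d_r (sub_k _ c_rb)).
by split=> d_r; exfalso; [apply: (not_d i.-1) d_r | apply: (not_d i) d_r] => //; lia.
Qed.

(* Walking along the edges c_1, ..., c_M. *)
Lemma root_chain : d 0 r <-> d M r.
Proof.
suff chain k : (k <= M)%N -> d 0 r <-> d k r by exact: chain.
elim: k => [//|k IHk] kM.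
by apply: (iff_trans (IHk (ltnW kM))); apply: (root_step (i := k.+1)); lia.
Qed.

(* On the closing edge c_0 the quadratic is (r - a)(r - e) - w r with
   w ∈ c_0; either factor in c_0 contradicts root_chain. *)
Lemma root_contradiction : False.
Proof.
have [to_M from_M] := root_chain.
have ideal_c0 := prime_ideal (prime_c 0).
have ideal_d0 := prime_ideal (prime_d 0).
have ideal_dM := prime_ideal (prime_d M).
have sub_0 : ideal_incl (c 0) (d 0) by apply: c_sub_d; rewrite /cyclic_adjacent; lia.
have sub_M : ideal_incl (c 0) (d M) by apply: c_sub_d; rewrite /cyclic_adjacent; lia.
have dM_a : d M a by apply: d_a; lia.
have d0_e : d 0 e by apply: d_e; lia.
have : c 0 ((r - a) * (r - e)).
  have -> : (r - a) * (r - e) = (r - (a + w + e)) * r + a * e + w * r by ring.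
  exact: (ideal_add ideal_c0 (root_r (prime_c 0)) (ideal_mulr ideal_c0 c0w)).
case/(prime_mul (prime_c 0)) => [c_ra | c_re].
- have dM_r : d M r.
    by rewrite -(subrK a r); exact: (ideal_add ideal_dM (sub_M _ c_ra) dM_a).
  apply: not_d0a; rewrite -(subKr r a).
  exact: (ideal_sub ideal_d0 (from_M dM_r) (sub_0 _ c_ra)).
- have d0_r : d 0 r.
    by rewrite -(subrK e r); exact: (ideal_add ideal_d0 (sub_0 _ c_re) d0_e).
  apply: not_dMe; rewrite -(subKr r e).
  exact: (ideal_sub ideal_dM (to_M d0_r) (sub_M _ c_re)).
Qed.

End Root.

End Witnesses.

Lemma no_prime_polygon : quadratic_roots_mod_primes R -> False.
Proof.
move=> roots; have [a c_a not_d0a] := exists_a.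
have [e c_e not_dMe] := exists_e; have [w c0w not_dw] := exists_w.
have [r root_r] := roots (a + w + e) (a * e).
exact: (root_contradiction c_a not_d0a c_e not_dMe c0w not_dw root_r).
Qed.

End PrimePolygon.

Lemma adjacent_mod_succ (M i j : nat) : (i <= M)%N -> (j <= M)%N ->
  (i = j \/ i = (j + 1) %% M.+1)%N <-> cyclic_adjacent M i j.
Proof.
move=> iM jM; rewrite /cyclic_adjacent addn1; have [j_ltM | j_geM] := ltnP j M.
  by rewrite modn_small //; split=> adj; lia.
have -> : j = M by lia.
by rewrite modnn; split=> adj; lia.
Qed.

(* A polygon in Spec(R) gives a polygon of primes: its vanishing ideals. *)
Lemma polygon_prime_family (R : comNzRingType) : polygon R ->
  exists M (c d : nat -> R -> Prop),
    [/\ (2 <= M)%N, (forall i, is_prime_ideal (c i)), (forall j, is_prime_ideal (d j)) &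
        forall i j, (i <= M)%N -> (j <= M)%N ->
          ideal_incl (c i) (d j) <-> cyclic_adjacent M i j].
Proof.
case=> m [m_gt2 [C [D [irrC irrD incl_CD]]]].
case: m m_gt2 C D irrC irrD incl_CD => [//|M] M_ge2 C D irrC irrD incl_CD.
exists M, (fun i => vanishing_ideal (C (inord i))), (fun j => vanishing_ideal (D (inord j))).
split=> // [i | j | i j iM jM]; try exact: irreducible_vanishing_prime.
have inord_eq : (inord i = inord j :> 'I_M.+1) <-> i = j.
  by split=> [/(congr1 val) | -> //]; rewrite /= !inordK.
have := spec_sub_vanishing (irreducible_is_closed (irrC (inord i)))
  (irreducible_is_closed (irrD (inord j))).
have := incl_CD (inord i) (inord j); rewrite !inordK //.
have := adjacent_mod_succ iM jM; tauto.
Qed.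

Theorem mainTheorem1 (R : comNzRingType) (n : nat) (hn : (1 <= n)%N)
  (hR : adically_closed R (2 * n)) : ~ polygon R.
Proof.
move=> /polygon_prime_family [M [c [d [M_ge2 prime_c prime_d incl_cd]]]].
exact: (no_prime_polygon M_ge2 prime_c prime_d incl_cd (adically_closed_quadratic hR)).
Qed.
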